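(* Let $h:[\ell,r]\to\mathbb{R}$ be a continuous concave function, $s>0$, and $P\subset\mathrm{xExt}(h)$ a set with $\ell,r\in P$ such that for every $y\in\mathrm{xExt}(h)$ there is $x\in P$ with $|x-y|<s$. Suppose $|h'_\pm|\leq m$ for some $m\geq0$, and let $\bar{h}:[\ell,r]\to\mathbb{R}$ be a concave function with $\bar{h}(x)\geq h(x)$ for all $x\in P$. Then $\bar{h}(x)+2ms\geq h(x)$ for all $x\in[\ell,r]$.
   Context: $h'_\pm(x)=\lim_{y\to x^\pm}\frac{h(y)-h(x)}{y-x}$ are the one-sided derivatives. $\mathrm{xExt}(h)=\{\ell,r\}\cup\{x\in(\ell,r): h|_{[x-\delta,x+\delta]}\text{ is not linear for any }\delta>0\}$. *)

From HB Require Import structures.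
From mathcomp Require Import all_boot all_order all_algebra.
From mathcomp Require Import all_classical all_reals all_analysis.
Set Implicit Arguments. Unset Strict Implicit. Unset Printing Implicit Defensive.
Import Order.TTheory GRing.Theory Num.Theory.
Import numFieldNormedType.Exports.
Local Open Scope classical_set_scope.
Local Open Scope ring_scope.

Definition concave_on {R : realType} (l r : R) (h : R -> R) : Prop :=
  forall x y t : R, l <= x <= r -> l <= y <= r -> 0 <= t <= 1 ->
    t * h x + (1 - t) * h y <= h (t * x + (1 - t) * y).

Definition right_deriv {R : realType} (h : R -> R) (x d : R) : Prop :=
  (fun y => (h y - h x) / (y - x)) @ x^'+ --> d.

Definition left_deriv {R : realType} (h : R -> R) (x d : R) : Prop :=
  (fun y => (h y - h x) / (y - x)) @ x^'- --> d.

Definition affine_on {R : realType} (a b : R) (h : R -> R) : Prop :=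
  exists c0 c1 : R, forall y, a <= y <= b -> h y = c1 * y + c0.

Definition xExt {R : realType} (l r : R) (h : R -> R) : set R :=
  [set x | x = l \/ x = r \/
     (l < x < r /\ forall delta : R, 0 < delta ->
        l <= x - delta -> x + delta <= r -> ~ affine_on (x - delta) (x + delta) h)].

From HB Require Import structures.
From mathcomp Require Import all_boot all_order all_algebra.
From mathcomp Require Import all_classical all_reals all_analysis.
From mathcomp Require Import ring lra.
Import Order.TTheory GRing.Theory Num.Theory.
Import numFieldNormedType.Exports.
Local Open Scope classical_set_scope.
Local Open Scope ring_scope.

(* Take p1 < x < p2 in P, nearest to x on each side up to eps (P need not be
   closed).  Concavity of hbar and hbar >= h on P put hbar above the chord of
   h through p1, p2, so it suffices to bound h - chord at x.  The derivative
   bounds make h m-Lipschitz, hence h - chord is at most 2m times the distance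
   to p1 or to p2.  Every point of [p1 + s + eps, p2 - s - eps] is at distance
   >= s from P, so it is not in xExt(h): h is locally affine there, hence
   affine by a sup argument, and h - chord is maximal at an endpoint, within
   s + eps of p1 or p2. *)

Definition chord {R : realFieldType} (f : R -> R) (y z w : R) : R :=
  f y + (f z - f y) / (z - y) * (w - y).

Section Chord.
Context {R : realFieldType}.
Implicit Types (f g : R -> R) (m y z w : R).

Lemma chordC f y z : chord f y z =1 chord f z y.
Proof.
move=> w; have [->|yz] := eqVneq y z; first by [].
by rewrite /chord; field; rewrite !subr_eq0 yz eq_sym.
Qed.

Lemma chordE f y z w : y != z ->
  chord f y z w = ((z - w) * f y + (w - y) * f z) / (z - y).
Proof. by move=> yz; rewrite /chord; field; rewrite subr_eq0 eq_sym. Qed.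

Lemma ler_chord [f g y z w] : y < z -> y <= w <= z -> f y <= g y -> f z <= g z ->
  chord f y z w <= chord g y z w.
Proof.
move=> yz /andP[yw wz] fgy fgz; rewrite !chordE ?lt_eqF //.
rewrite ler_pM2r ?invr_gt0 ?subr_gt0 //.
by rewrite lerD // ler_wpM2l // subr_ge0.
Qed.

Lemma sub_chord_le_dist [f m y z w] : 0 <= m ->
  `|f z - f y| <= m * `|z - y| -> `|f w - f y| <= m * `|w - y| ->
  f w - chord f y z w <= 2 * m * `|w - y|.
Proof.
move=> m0 Lz Lw; set c := (f z - f y) / (z - y).
have cm : `|c| <= m.
  rewrite /c; have [->|yz] := eqVneq z y; first by rewrite !subrr mul0r normr0.
  by rewrite normrM normfV ler_pdivrMr // normr_gt0 subr_eq0.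
have cw : - (c * (w - y)) <= m * `|w - y|.
  by rewrite (le_trans (ler_norm _)) // normrN normrM ler_wpM2r.
have := ler_norm (f w - f y).
rewrite /chord -/c; lra.
Qed.

End Chord.

Section ConcaveOn.
Context {R : realType} {l r : R} {h : R -> R}.
Hypothesis hc : concave_on l r h.

Lemma concave_on_chord_le [y z w] : l <= y -> y < z -> z <= r -> y <= w <= z ->
  chord h y z w <= h w.
Proof.
move=> ly yz zr /andP[yw wz]; have zy0 : 0 < z - y by rewrite subr_gt0.
set t := (z - w) / (z - y).
have t01 : 0 <= t <= 1.
  rewrite /t ler_pdivrMr // mul1r divr_ge0 ?subr_ge0 //=; lra.
have yI : l <= y <= r by rewrite ly /=; lra.
have zI : l <= z <= r by rewrite zr andbT; lra.
have := hc y z t yI zI t01.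
have -> : t * y + (1 - t) * z = w by rewrite /t; field; lra.
suff -> : t * h y + (1 - t) * h z = chord h y z w by [].
by rewrite /t /chord; field; lra.
Qed.

Lemma slope_le_right_deriv [y z d] : l <= y -> y < z -> z <= r ->
  right_deriv h y d -> h z - h y <= d * (z - y).
Proof.
move=> ly yz zr hd; rewrite -ler_pdivrMr ?subr_gt0 //.
apply: (cvgr_to_ge hd); near=> w.
have yw : y < w by near: w; exact: nbhs_right_gt.
have wz : w < z by near: w; exact: nbhs_right_lt.
have : chord h y z w <= h w by apply: concave_on_chord_le; rewrite ?(ltW yw) ?(ltW wz).
rewrite /chord ler_pdivlMr ?subr_gt0 //; lra.
Unshelve. all: by end_near.
Qed.

Lemma left_deriv_le_slope [y z d] : l <= y -> y < z -> z <= r ->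
  left_deriv h z d -> d * (z - y) <= h z - h y.
Proof.
move=> ly yz zr hd; rewrite -ler_pdivlMr ?subr_gt0 //.
apply: (cvgr_to_le hd); near=> w.
have yw : y < w by near: w; exact: nbhs_left_gt.
have wz : w < z by near: w; exact: nbhs_left_lt.
set c := (h z - h y) / (z - y).
have cE : c * (z - y) = h z - h y by rewrite /c divfK // subr_eq0 gt_eqF.
have : chord h y z w <= h w by apply: concave_on_chord_le; rewrite ?(ltW yw) ?(ltW wz).
rewrite /chord -/c ler_ndivrMr ?subr_lt0 //; lra.
Unshelve. all: by end_near.
Qed.

Context {m : R}.
Hypothesis hdr : forall x, l <= x < r -> exists d, right_deriv h x d /\ `|d| <= m.
Hypothesis hdl : forall x, l < x <= r -> exists d, left_deriv h x d /\ `|d| <= m.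

Lemma concave_on_lipschitz y z : l <= y <= r -> l <= z <= r ->
  `|h z - h y| <= m * `|z - y|.
Proof.
wlog yz : y z / y <= z.
  move=> wlog yI zI; have [/wlog|/ltW/wlog] := leP y z; first exact.
  by rewrite distrC (distrC z); apply.
move=> /andP[ly yr] /andP[lz zr].
have [<-|yz'] := eqVneq y z; first by rewrite !subrr normr0 mulr0.
have {yz' yz} yz : y < z by rewrite lt_neqAle yz' yz.
have [d1 [hd1 /ler_normlP[_ d1m]]] : exists d, right_deriv h y d /\ `|d| <= m.
  by apply: hdr; rewrite ly /=; lra.
have [d2 [hd2 /ler_normlP[d2m _]]] : exists d, left_deriv h z d /\ `|d| <= m.
  by apply: hdl; rewrite zr andbT; lra.
have := slope_le_right_deriv ly yz zr hd1.
have := left_deriv_le_slope ly yz zr hd2.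
rewrite (gtr0_norm (_ : 0 < z - y)) ?subr_gt0 // => lo up.
by apply/ler_normlP; split; nra.
Qed.

End ConcaveOn.

Section AffineOn.
Context {R : realType}.
Implicit Types (f : R -> R) (a b c d u v x : R).

Lemma affine_on_subset a b c d f :
  affine_on a b f -> a <= c -> d <= b -> affine_on c d f.
Proof.
move=> [c0 [c1 aff]] ac db; exists c0, c1 => y /andP[cy yd].
by apply: aff; rewrite (le_trans ac cy) (le_trans yd db).
Qed.

Lemma affine_on_merge a b c d f : a <= c -> c < b -> b <= d ->
  affine_on a b f -> affine_on c d f -> affine_on a d f.
Proof.
move=> ac cb bd [c0 [c1 aff1]] [e0 [e1 aff2]].
have Ec : c1 * c + c0 = e1 * c + e0.
  by rewrite -aff1 ?ac ?(ltW cb) // -aff2 // lexx (le_trans (ltW cb) bd).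
have Eb : c1 * b + c0 = e1 * b + e0.
  by rewrite -aff1 ?lexx ?(le_trans ac (ltW cb)) // -aff2 // (ltW cb) bd.
have c1E : c1 = e1.
  apply: (mulIf (_ : b - c != 0)); first by rewrite subr_eq0 gt_eqF.
  by rewrite !mulrBr; lra.
have c0E : c0 = e0 by move: Ec; rewrite c1E; lra.
exists c0, c1 => y /andP[ay yd]; have [yb|by_] := leP y b.
  by apply: aff1; rewrite ay yb.
by rewrite c0E c1E; apply: aff2; rewrite yd andbT; lra.
Qed.

Lemma affine_on_of_local u v f :
  (forall y, u <= y <= v -> exists2 e, 0 < e & affine_on (y - e) (y + e) f) ->
  affine_on u v f.
Proof.
move=> loc; have [vu|uv] := ltP v u.
  by exists 0, 0 => y /andP[uy yv]; lra.
pose S := [set w | u <= w <= v /\ affine_on u w f].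
have Su : S u.
  split; first by rewrite lexx uv.
  by exists (f u), 0 => y /andP[uy yu]; rewrite mul0r add0r (@le_anti _ _ y u) ?uy ?yu.
have supS : has_sup S by split; [exists u | exists v => w [/andP[_ ->]]].
have [uS Sv] : u <= sup S /\ sup S <= v.
  split; first exact: sup_upper_bound.
  by apply: ge_sup; [exists u | move=> w [/andP[_ ->]]].
have [e e0 affe] : exists2 e, 0 < e & affine_on (sup S - e) (sup S + e) f.
  by apply: loc; rewrite uS Sv.
have [w Sw ltw] := sup_adherent e0 supS.
have wS : w <= sup S by exact: sup_upper_bound.
have [/andP[uw _] affw] := Sw.
have aff : affine_on u (sup S + e) f.
  have [eu|ue] := leP (sup S - e) u; first exact: affine_on_subset affe eu _.
  by apply: affine_on_merge affw affe; lra.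
have [ev|ve] := leP (sup S + e) v; last by apply: affine_on_subset aff _ _; lra.
have : sup S + e <= sup S.
  by apply: sup_upper_bound => //; split => //; rewrite ev andbT; lra.
lra.
Qed.

Lemma affine_on_le_max [u v x f] : affine_on u v f -> u <= x <= v ->
  f x <= Num.max (f u) (f v).
Proof.
move=> [c0 [c1 aff]] /andP[ux xv].
rewrite !aff ?ux ?xv ?lexx ?(le_trans ux xv) // le_max !lerD2r.
have [c1_ge0|c1_lt0] := leP 0 c1.
  by apply/orP; right; rewrite ler_wpM2l.
by apply/orP; left; rewrite ler_wnM2l // ltW.
Qed.

Lemma affine_on_sub_chord [u v f] y z :
  affine_on u v f -> affine_on u v (fun w => f w - chord f y z w).
Proof.
move=> [c0 [c1 aff]]; set c := (f z - f y) / (z - y).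
exists (c0 - f y + c * y), (c1 - c) => w wI.
by rewrite aff // /chord -/c; ring.
Qed.

Lemma affine_on_xExt_free l r u v f : l <= u -> v <= r ->
  (forall y, u <= y <= v -> ~ xExt l r f y) -> affine_on u v f.
Proof.
move=> lu vr free; apply: affine_on_of_local => y yI.
have /andP[uy yv] := yI.
have yl : y != l by apply/eqP => yl; apply: (free y yI); left.
have yr : y != r by apply/eqP => yr; apply: (free y yI); right; left.
apply: contrapT => nloc; apply: (free y yI); right; right; split.
  by rewrite !lt_neqAle eq_sym yl yr (le_trans lu uy) (le_trans yv vr).
by move=> e e0 _ _ affe; apply: nloc; exists e.
Qed.

Lemma sub_chord_le_affine_gap [l r m p1 p2 u v t x f] : 0 <= m ->
  (forall y z, l <= y <= r -> l <= z <= r -> `|f z - f y| <= m * `|z - y|) ->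
  l <= p1 -> p1 <= u -> v <= p2 -> p2 <= r -> u - p1 <= t -> p2 - v <= t ->
  affine_on u v f -> p1 <= x <= p2 -> f x - chord f p1 p2 x <= 2 * m * t.
Proof.
move=> m0 lip lp1 p1u vp2 p2r up1 p2v aff /andP[p1x xp2].
have I w : p1 <= w <= p2 -> l <= w <= r.
  by move=> /andP[p1w wp2]; rewrite (le_trans lp1 p1w) (le_trans wp2 p2r).
have p1I : l <= p1 <= r by apply: I; rewrite lexx (le_trans p1x xp2).
have p2I : l <= p2 <= r by apply: I; rewrite lexx (le_trans p1x xp2).
have near_end w : p1 <= w <= p2 -> w - p1 <= t \/ p2 - w <= t ->
    f w - chord f p1 p2 w <= 2 * m * t.
  move=> wI; have /andP[p1w wp2] := wI; have mt := ler_wpM2l (mulr_ge0 _ m0).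
  case=> wt.
  - apply: le_trans (sub_chord_le_dist m0 (lip _ _ p1I p2I) (lip _ _ p1I (I _ wI))) _.
    by rewrite ger0_norm ?subr_ge0 // mt.
  - rewrite chordC; apply: le_trans (sub_chord_le_dist m0 (lip _ _ p2I p1I) (lip _ _ p2I (I _ wI))) _.
    by rewrite distrC ger0_norm ?subr_ge0 // mt.
have [xu|ux] := leP x u; first by apply: near_end; rewrite ?p1x ?xp2 //; lra.
have [vx|xv] := leP v x; first by apply: near_end; rewrite ?p1x ?xp2 //; lra.
apply: le_trans (affine_on_le_max (affine_on_sub_chord p1 p2 aff) _) _.
  by rewrite !ltW.
by rewrite ge_max !near_end ?p1u ?vp2 //=; lra.
Qed.

End AffineOn.

Lemma bracket_gap {R : realType} [P : set R] [l r x e : R] :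
  P l -> P r -> l <= x <= r -> ~ P x -> 0 < e ->
  exists p1 p2, [/\ P p1, P p2, p1 < x < p2 &
    forall p, P p -> p1 + e < p -> p < p2 - e -> False].
Proof.
move=> Pl Pr /andP[lx xr] nPx e0.
pose A := [set p | P p /\ p <= x]; pose B := [set p | P p /\ x <= p].
have supA : has_sup A by split; [exists l | exists x => p []].
have infB : has_inf B by split; [exists r | exists x => p []].
have [p1 [Pp1 p1x] ltp1] := sup_adherent e0 supA.
have [p2 [Pp2 xp2] ltp2] := inf_adherent e0 infB.
exists p1, p2; split => //.
  rewrite !lt_neqAle p1x xp2 !andbT.
  apply/andP; split; apply/eqP => ex; apply: nPx; by [rewrite ex | rewrite -ex].
move=> p Pp p1p pp2; have [px|xp] := leP p x.
  have : p <= sup A by apply: (sup_upper_bound supA).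
  lra.
have : inf B <= p by apply: (ge_inf infB.2); split => //; rewrite ltW.
lra.
Qed.

Theorem mainTheorem20 (R : realType) (l r : R) (h hbar : R -> R) (s m : R)
  (P : set R) :
  {within `[l, r], continuous h} ->
  concave_on l r h ->
  0 < s ->
  P `<=` xExt l r h ->
  P l -> P r ->
  (forall y, xExt l r h y -> exists x, P x /\ `|x - y| < s) ->
  0 <= m ->
  (forall x, l <= x < r -> exists d, right_deriv h x d /\ `|d| <= m) ->
  (forall x, l < x <= r -> exists d, left_deriv h x d /\ `|d| <= m) ->
  concave_on l r hbar ->
  (forall x, P x -> h x <= hbar x) ->
  forall x, l <= x <= r -> h x <= hbar x + 2 * m * s.
Proof.
move=> _ hc s0 PxExt Pl Pr nearP m0 hdr hdl hbc hPb x xI.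
have [Px|nPx] := pselect (P x).
  by rewrite -[h x]addr0 lerD ?hPb // !mulr_ge0 // ltW.
have lr : l <= r by case/andP: xI; apply: le_trans.
have PI p : P p -> l <= p <= r.
  by move=> /PxExt[->|[->|[/andP[lp pr] _]]]; rewrite ?lexx ?lr ?ltW.
apply/ler_addgt0Pr => e e0.
pose eps := e / (2 * m + 1).
have eps0 : 0 < eps by rewrite divr_gt0 //; lra.
have [p1 [p2 [Pp1 Pp2 /andP[p1x xp2] gap]]] := bracket_gap Pl Pr xI nPx eps0.
have [/andP[lp1 _] /andP[_ p2r]] := (PI _ Pp1, PI _ Pp2).
have aff : affine_on (p1 + (s + eps)) (p2 - (s + eps)) h.
  apply: (affine_on_xExt_free l r); [lra | lra |].
  move=> y /andP[uy yv] /nearP[p [Pp]]; rewrite ltr_distlC => /andP[py yp].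
  by apply: (gap p Pp); lra.
have h_sub_chord : h x - chord h p1 p2 x <= 2 * m * (s + eps).
  apply: (sub_chord_le_affine_gap m0 (concave_on_lipschitz hc hdr hdl) lp1 _ _ p2r _ _ aff);
    rewrite ?(ltW p1x) ?(ltW xp2) //; lra.
have chord_le : chord h p1 p2 x <= hbar x.
  have p12 := lt_trans p1x xp2; have xI' : p1 <= x <= p2 by rewrite !ltW.
  apply: le_trans (concave_on_chord_le hbc lp1 p12 p2r xI').
  exact: ler_chord p12 xI' (hPb _ Pp1) (hPb _ Pp2).
have eps_small : 2 * m * eps <= e.
  by rewrite /eps mulrA ler_pdivrMr; [nra | lra].
lra.
Qed.
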